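(* Assume the standing setup with (C1)–(C3), $1\le i\le n-1$, $\xi\in V_{\mathbb C}(\mathcal I_i)$, $\eta_i$, $\xi_{i+1,j}$ and $\theta_j$ ($j=1,\dots,m$) as in the context. Let $I_i=\langle[a,b],[c,d]\rangle$ be a complex interval containing $\eta_i$, and for $j=1,\dots,m$ let $K_j=\langle[p_j,q_j],[g_j,h_j]\rangle$ be pairwise disjoint complex intervals with $\theta_j\in K_j$. Define $J_{i+1,j}=\frac{K_j-I_i}{s_1\cdots s_i}=\frac{\langle[p_j-b,\,q_j-a],\,[g_j-d,\,h_j-c]\rangle}{s_1\cdots s_i}$. Suppose that for all $j$ $(q_j-p_j)+(b-a)<s_1\cdots s_i\,\epsilon$ and $(h_j-g_j)+(d-c)<s_1\cdots s_i\,\epsilon$, and that $S_{\eta_i}:=\min_{1\le k\ne j\le m}\mathrm{Dis}(K_k,K_j)>\max\{b-a,d-c\}$. Then $\xi_{i+1,j}\in J_{i+1,j}$ for every $j$, each $J_{i+1,j}$ has length less than $\epsilon$, and the $J_{i+1,j}$, $j=1,\dots,m$, are pairwise disjoint.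
   Context: Standing setup. $\mathcal P\subset\mathbb Q[x_1,\dots,x_n]$ zero-dimensional; $\mathcal I_i=(\mathcal P)\cap\mathbb Q[x_1,\dots,x_i]$ with complex zero set $V_{\mathbb C}(\mathcal I_i)$. For $c=u+v\mathrm{i}$, $|c|=\max\{|u|,|v|\}$. Positive rationals $d_i,r_i,s_i$ satisfy (C1) $d_i<\min\{D_i,d_{i-1}/(2s_{i-1})\}$ where $D_i=\min\{\tfrac12|\alpha-\beta| : \eta\in V_{\mathbb C}(\mathcal I_{i-1}),(\eta,\alpha),(\eta,\beta)\in V_{\mathbb C}(\mathcal I_i),\alpha\ne\beta\}$ ($+\infty$ if empty), $s_0=1,d_0=+\infty$; (C2) $r_i>2\max\{|\alpha_i| : (\alpha_1,\dots,\alpha_i)\in V_{\mathbb C}(\mathcal I_i)\}$; (C3) $s_i\le d_i/r_{i+1}$. For $\xi=(\xi_1,\dots,\xi_i)\in V_{\mathbb C}(\mathcal I_i)$: $\eta_i=\xi_1+s_1\xi_2+\cdots+s_1\cdots s_{i-1}\xi_i$; $(\xi,\xi_{i+1,j})$, $j=1,\dots,m$, are all points of $V_{\mathbb C}(\mathcal I_{i+1})$ over $\xi$; $\theta_j=\eta_i+s_1\cdots s_i\xi_{i+1,j}$. A complex interval $\langle[a,b],[c,d]\rangle$ ($a\le b$, $c\le d$ rational) is the closed rectangle $\{u+v\mathrm i: u\in[a,b],v\in[c,d]\}$, of length $\max\{b-a,d-c\}$; dividing by a positive number divides all endpoints. For real intervals with $a_1\le a_2$: $\mathrm{Dis}([a_1,b_1],[a_2,b_2])=a_2-b_1$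 if disjoint, else $0$; for complex intervals $\mathrm{Dis}(\langle I_1,J_1\rangle,\langle I_2,J_2\rangle)=\max\{\mathrm{Dis}(I_1,I_2),\mathrm{Dis}(J_1,J_2)\}$. *)

(* Complex numbers are modelled by algC (algebraic complex
   numbers): every point of the zero set of a zero-dimensional ideal over Q
   has algebraic coordinates, so nothing is lost. *)
From HB Require Import structures.
From mathcomp Require Import all_boot all_order all_algebra all_field.
Set Implicit Arguments. Unset Strict Implicit. Unset Printing Implicit Defensive.
Import Order.TTheory GRing.Theory Num.Theory.
Local Open Scope ring_scope.

(* Variable x_{k+1} is MVar k. *)
Inductive mpoly : Type :=
| MConst of rat
| MVar of nat
| MAdd of mpoly & mpoly
| MMul of mpoly & mpoly.

Fixpoint meval (e : seq algC) (p : mpoly) : algC :=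
  match p with
  | MConst c => ratr c
  | MVar k => nth 0 e k
  | MAdd p q => meval e p + meval e q
  | MMul p q => meval e p * meval e q
  end.

Fixpoint vars_below (k : nat) (p : mpoly) : bool :=
  match p with
  | MConst _ => true
  | MVar l => (l < k)%N
  | MAdd p q => vars_below k p && vars_below k q
  | MMul p q => vars_below k p && vars_below k q
  end.

(* equality of polynomials over Q = equality as functions on C^N
   (C is infinite) *)
Definition peq (p q : mpoly) : Prop := forall e, meval e p = meval e q.

Definition lincomb (gs P : seq mpoly) : mpoly :=
  foldr (fun gp acc => MAdd (MMul gp.1 gp.2) acc) (MConst 0) (zip gs P).

(* f belongs to I_i = (P) ∩ Q[x_1..x_i], where (P) ⊆ Q[x_1..x_n] *)
Definition elim_ideal (P : seq mpoly) (n i : nat) (f : mpoly) : Prop :=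
  vars_below i f /\
  exists gs : seq mpoly, size gs = size P /\ all (vars_below n) gs /\
    peq f (lincomb gs P).

Definition VC (P : seq mpoly) (n i : nat) (x : seq algC) : Prop :=
  size x = i /\ forall f, elim_ideal P n i f -> meval x f = 0.

Definition zero_dim (P : seq mpoly) (n : nat) : Prop :=
  exists s : seq (seq algC), forall x, VC P n n x -> x \in s.

Definition cnorm (z : algC) : algC := Num.max `|'Re z| `|'Im z|.

Definition cond_C1 (P : seq mpoly) (n : nat) (d s : nat -> rat) : Prop :=
  forall i, (1 <= i <= n)%N ->
    (forall (eta : seq algC) (al be : algC),
        VC P n i.-1 eta -> VC P n i (rcons eta al) -> VC P n i (rcons eta be) ->
        al != be -> ratr (d i) < cnorm (al - be) / 2) /\
    ((2 <= i)%N -> d i < d i.-1 / (2 * s i.-1)).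

Definition cond_C2 (P : seq mpoly) (n : nat) (r : nat -> rat) : Prop :=
  forall i, (1 <= i <= n)%N ->
    forall alpha : seq algC, VC P n i alpha ->
      2 * cnorm (nth 0 alpha i.-1) < ratr (r i).

Definition cond_C3 (n : nat) (d r s : nat -> rat) : Prop :=
  forall i, (1 <= i < n)%N -> s i <= d i / r i.+1.

Definition sprod (s : nat -> rat) (k : nat) : rat := \prod_(l < k) s l.+1.

Definition eta_of (s : nat -> rat) (xi : seq algC) : algC :=
  \sum_(k < size xi) ratr (sprod s k) * nth 0 xi k.

Record cint := CInt { re_lo : rat; re_hi : rat; im_lo : rat; im_hi : rat }.

Definition cint_wf (I : cint) : Prop := re_lo I <= re_hi I /\ im_lo I <= im_hi I.

Definition in_cint (z : algC) (I : cint) : Prop :=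
  ratr (re_lo I) <= 'Re z <= ratr (re_hi I) /\
  ratr (im_lo I) <= 'Im z <= ratr (im_hi I).

Definition cint_len (I : cint) : rat :=
  Num.max (re_hi I - re_lo I) (im_hi I - im_lo I).

Definition cint_disjoint (I J : cint) : Prop :=
  forall z : algC, ~ (in_cint z I /\ in_cint z J).

Definition cint_sub (K I : cint) : cint :=
  CInt (re_lo K - re_hi I) (re_hi K - re_lo I)
       (im_lo K - im_hi I) (im_hi K - im_lo I).

Definition cint_div (I : cint) (t : rat) : cint :=
  CInt (re_lo I / t) (re_hi I / t) (im_lo I / t) (im_hi I / t).

Definition rdis (a1 b1 a2 b2 : rat) : rat :=
  if a1 <= a2 then (if b1 < a2 then a2 - b1 else 0)
  else (if b2 < a1 then a1 - b2 else 0).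

Definition cdis (I J : cint) : rat :=
  Num.max (rdis (re_lo I) (re_hi I) (re_lo J) (re_hi J))
          (rdis (im_lo I) (im_hi I) (im_lo J) (im_hi J)).

From HB Require Import structures.
From mathcomp Require Import all_boot all_order all_algebra all_field.
From mathcomp Require Import ring lra.
Import Order.TTheory GRing.Theory Num.Theory.
Local Open Scope ring_scope.

(* Write t = s_1 ... s_i > 0, so that theta_j = eta_i + t * xi_{i+1,j}.  The
   proof is componentwise: a complex interval is a product of two real ones,
   and everything reduces to the one-dimensional statement

     a <= e <= b  and  p <= e + t w <= q   imply   (p - b)/t <= w <= (q - a)/t,

   i.e. w = (theta - eta)/t lies in (K - I)/t.  The width of (K - I)/t is
   ((q - p) + (b - a))/t, which is < eps by hypothesis.  Two quotients
   (K - I)/t and (L - I)/t can only meet if K and L, each enlarged by b - a,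
   overlap; then Dis(K, L) <= b - a in that coordinate, which contradicts
   Dis(K, L) > max(b - a, d - c). *)

Lemma sprod_gt0 (s : nat -> rat) (k : nat) :
  (forall l, (1 <= l <= k)%N -> 0 < s l) -> 0 < sprod s k.
Proof. by move=> spos; apply: prodr_gt0 => l _; apply: spos; rewrite ltn_ord. Qed.

Lemma rdis_le (p1 q1 p2 q2 delta : rat) : 0 <= delta ->
  p1 <= q1 -> p2 <= q2 -> p1 - q2 <= delta -> p2 - q1 <= delta ->
  rdis p1 q1 p2 q2 <= delta.
Proof. by move=> *; rewrite /rdis; case: ifP => _; case: ifP => _; lra. Qed.

Section RealBounds.
Variable R : numFieldType.
Implicit Types (a b p q t : rat) (e w : R).

Lemma quotient_interval_mem a b p q t e w : 0 < t ->
  ratr a <= e <= ratr b -> ratr p <= e + ratr t * w <= ratr q ->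
  ratr ((p - b) / t) <= w <= ratr ((q - a) / t).
Proof.
move=> t_gt0 /andP[ae eb] /andP[pe eq].
have tR_gt0 : (0 : R) < ratr t by rewrite ltr0q.
have wE : w * ratr t = (e + ratr t * w) - e by ring.
rewrite !rmorphM !rmorphB /= fmorphV /= ler_pdivrMr // ler_pdivlMr // wE.
by apply/andP; split; apply: lerB.
Qed.

Lemma ratr_div_lt a t (eps : R) : 0 < t -> ratr a < ratr t * eps ->
  ratr (a / t) < eps.
Proof.
move=> t_gt0 lt_a; rewrite rmorphM /= fmorphV /= ltr_pdivrMr ?ltr0q //.
by rewrite mulrC.
Qed.

Lemma rdis_le_of_quotient_overlap a b p1 q1 p2 q2 t (u : R) :
  0 < t -> a <= b -> p1 <= q1 -> p2 <= q2 ->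
  ratr ((p1 - b) / t) <= u <= ratr ((q1 - a) / t) ->
  ratr ((p2 - b) / t) <= u <= ratr ((q2 - a) / t) ->
  rdis p1 q1 p2 q2 <= b - a.
Proof.
move=> t_gt0 ab pq1 pq2 /andP[l1 u1] /andP[l2 u2].
have cross (x y : rat) : ratr (x / t) <= u -> u <= ratr (y / t) -> x <= y.
  have tV_gt0 : 0 < t^-1 by rewrite invr_gt0.
  move=> xu uy; rewrite -(ler_pM2r tV_gt0) -(ler_rat R).
  exact: le_trans xu uy.
have := cross _ _ l1 u2; have := cross _ _ l2 u1 => c21 c12.
apply: rdis_le; lra.
Qed.

End RealBounds.
Arguments rdis_le_of_quotient_overlap {R a b p1 q1 p2 q2 t u}.

Lemma ratr_real (t : rat) : (ratr t : algC) \is Num.real.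
Proof. by rewrite realE ler0q lerq0 le_total. Qed.

Lemma Re_add_ratr_mul (t : rat) (e w : algC) :
  'Re (e + ratr t * w) = 'Re e + ratr t * 'Re w.
Proof. by rewrite raddfD /= ReMl // ratr_real. Qed.

Lemma Im_add_ratr_mul (t : rat) (e w : algC) :
  'Im (e + ratr t * w) = 'Im e + ratr t * 'Im w.
Proof. by rewrite raddfD /= ImMl // ratr_real. Qed.

Section ComplexQuotient.
Variables (I : cint) (t : rat).
Hypothesis t_gt0 : 0 < t.

Definition quotient_cint (K : cint) : cint := cint_div (cint_sub K I) t.

Lemma quotient_cint_mem (K : cint) (eta w : algC) :
  in_cint eta I -> in_cint (eta + ratr t * w) K -> in_cint w (quotient_cint K).
Proof.
case=> Ire Iim.
rewrite /in_cint /quotient_cint /= Re_add_ratr_mul Im_add_ratr_mul => -[Kre Kim].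
by split; [exact: quotient_interval_mem t_gt0 Ire Kre
          | exact: quotient_interval_mem t_gt0 Iim Kim].
Qed.

Lemma quotient_cint_len_lt (K : cint) (eps : algC) :
  ratr ((re_hi K - re_lo K) + (re_hi I - re_lo I)) < ratr t * eps ->
  ratr ((im_hi K - im_lo K) + (im_hi I - im_lo I)) < ratr t * eps ->
  ratr (cint_len (quotient_cint K)) < eps.
Proof.
move=> re_lt im_lt; rewrite /cint_len /= -!mulrBl.
have widthE (lK hK lI hI : rat) : hK - lI - (lK - hI) = hK - lK + (hI - lI).
  by ring.
rewrite !widthE /Num.max; case: ifP => _; exact: ratr_div_lt.
Qed.

(* Quotients of intervals whose distance exceeds the length of I are
   disjoint: a common point would bring both coordinates within the
   corresponding width of I. *)
Lemma quotient_cint_disjoint (K L : cint) :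
  cint_wf I -> cint_wf K -> cint_wf L -> cint_len I < cdis K L ->
  cint_disjoint (quotient_cint K) (quotient_cint L).
Proof.
case=> Ire Iim [Kre Kim] [Lre Lim] len_lt z.
rewrite /in_cint /quotient_cint /= => -[[zKre zKim] [zLre zLim]].
move: len_lt; rewrite /cdis /cint_len; apply/negP; rewrite -leNgt ge_max.
have dre := rdis_le_of_quotient_overlap t_gt0 Ire Kre Lre zKre zLre.
have dim := rdis_le_of_quotient_overlap t_gt0 Iim Kim Lim zKim zLim.
by rewrite !le_max dre dim orbT.
Qed.

End ComplexQuotient.

Lemma cint_disjoint_sym (I J : cint) : cint_disjoint I J -> cint_disjoint J I.
Proof. by move=> dIJ z [zJ zI]; exact: dIJ z (conj zI zJ). Qed.

Theorem mainTheorem10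
  (n : nat) (P : seq mpoly)
  (HP : all (vars_below n) P) (Hzd : zero_dim P n)
  (d r s : nat -> rat)
  (Hpos : forall k, (1 <= k <= n)%N -> 0 < d k /\ 0 < r k /\ 0 < s k)
  (HC1 : cond_C1 P n d s) (HC2 : cond_C2 P n r) (HC3 : cond_C3 n d r s)
  (i : nat) (Hi : (1 <= i <= n.-1)%N)
  (xi : seq algC) (Hxi : VC P n i xi)
  (m : nat) (x : 'I_m -> algC) (Hxinj : injective x)
  (Hxall : forall al : algC, VC P n i.+1 (rcons xi al) <-> exists j, al = x j)
  (I : cint) (HIwf : cint_wf I) (HetaI : in_cint (eta_of s xi) I)
  (K : 'I_m -> cint) (HKwf : forall j, cint_wf (K j))
  (HthK : forall j, in_cint (eta_of s xi + ratr (sprod s i) * x j) (K j))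
  (HKdisj : forall j k, j != k -> cint_disjoint (K j) (K k))
  (eps : algC)
  (Hre : forall j, ratr ((re_hi (K j) - re_lo (K j)) + (re_hi I - re_lo I))
                     < ratr (sprod s i) * eps)
  (Him : forall j, ratr ((im_hi (K j) - im_lo (K j)) + (im_hi I - im_lo I))
                     < ratr (sprod s i) * eps)
  (HS : forall j k, j != k -> cint_len I < cdis (K k) (K j)) :
  let J := fun j => cint_div (cint_sub (K j) I) (sprod s i) in
  (forall j, in_cint (x j) (J j)) /\
  (forall j, ratr (cint_len (J j)) < eps) /\
  (forall j k, j != k -> cint_disjoint (J j) (J k)).
Proof.
move=> J.
have t_gt0 : 0 < sprod s i.
  apply: sprod_gt0 => l /andP[l_ge1 l_le_i].
  have l_range : (1 <= l <= n)%N.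
    by rewrite l_ge1 (leq_trans l_le_i) // (leq_trans (andP Hi).2) ?leq_pred.
  by have [_ []] := Hpos l l_range.
split; [|split].
- move=> j; exact: quotient_cint_mem t_gt0 _ _ _ HetaI (HthK j).
- move=> j; exact: quotient_cint_len_lt t_gt0 _ _ (Hre j) (Him j).
- move=> j k jk; apply: cint_disjoint_sym.
  exact: quotient_cint_disjoint t_gt0 _ _ HIwf (HKwf k) (HKwf j) (HS j k jk).
Qed.
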